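(* Let $A_o,A_i\in\mathbb R^{n_y\times n_x}$, let $B_o,B_i\in\mathbb R^{n_y\times n_y}$ and $C_o,C_i\in\mathbb R^{n_x\times n_x}$ be invertible. The outer inclusion $y\in\{(A_o+B_o\Delta C_o)x:\|\Delta\|\le1\}$ contains the inner inclusion $y\in\{(A_i+B_i\Delta C_i)x:\|\Delta\|\le1\}$ if and only if $$\|\tilde A+\tilde B\Delta\tilde C\|\le 1\quad\text{for all }\Delta\in\mathbb C^{n_y\times n_x}\text{ with }\|\Delta\|\le1,$$ where $\tilde B=B_o^{-1}B_i$, $\tilde A=B_o^{-1}(A_i-A_o)C_o^{-1}$, $\tilde C=C_iC_o^{-1}$.
   Context: $\|\cdot\|$ is the spectral norm. The outer inclusion contains the inner one if every pair $(x,y)\in\mathbb C^{n_x}\times\mathbb C^{n_y}$ satisfying the inner inclusion also satisfies the outer inclusion. *)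

From HB Require Import structures.
From mathcomp Require Import all_boot all_order all_algebra.
From mathcomp Require Import complex.
From mathcomp Require Import boolp classical_sets reals.
Set Implicit Arguments. Unset Strict Implicit. Unset Printing Implicit Defensive.
Import Order.TTheory GRing.Theory Num.Theory.
Local Open Scope ring_scope.
Local Open Scope complex_scope.

Definition vnorm (R : realType) (n : nat) (x : 'cV[R[i]]_n) : R :=
  Num.sqrt (\sum_(k < n) (@complex.Re R (x k ord0) ^+ 2 + @complex.Im R (x k ord0) ^+ 2)).

Definition specnorm (R : realType) (m n : nat) (M : 'M[R[i]]_(m, n)) : R :=
  sup [set r : R | exists x : 'cV[R[i]]_n, vnorm x <= 1 /\ r = vnorm (M *m x)].

Definition cmx (R : realType) (m n : nat) (M : 'M[R]_(m, n)) : 'M[R[i]]_(m, n) :=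
  map_mx (fun r => r%:C) M.

Definition incl (R : realType) (ny nx : nat)
  (A : 'M[R]_(ny, nx)) (B : 'M[R]_ny) (C : 'M[R]_nx)
  (x : 'cV[R[i]]_nx) (y : 'cV[R[i]]_ny) : Prop :=
  exists Delta : 'M[R[i]]_(ny, nx),
    specnorm Delta <= 1 /\ y = (cmx A + cmx B *m Delta *m cmx C) *m x.

From HB Require Import structures.
From mathcomp Require Import all_boot all_order all_algebra.
From mathcomp Require Import complex.
From mathcomp Require Import boolp classical_sets reals.
Set Implicit Arguments. Unset Strict Implicit. Unset Printing Implicit Defensive.
Import Order.TTheory GRing.Theory Num.Theory Num.Def.
Local Open Scope ring_scope.

(* Put z := Co x and w := Bo^-1 (y - Ao x). The outer inclusion holds at (x, y)
   iff some contraction maps z to w, iff |w| <= |z|: by Cauchy-Schwarz the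
   rank-one matrix w z^* / |z|^2 is such a contraction. The inner inclusion
   with parameter Delta produces exactly w = (A~ + B~ Delta C~) z, so the
   containment says that every such matrix is a contraction, i.e. has spectral
   norm at most 1. *)

Section ColumnDot.
Variables (C : numClosedFieldType) (n : nat).

Fact hermitianmx1 : (1 : 'M[C]_1) \is hermitianmx _ false conjC.
Proof. by rewrite qualifE /= expr0 scale1r trmx1 map_mx1. Qed.

(* Columns are [n x 1] matrices, so the standard inner product is the matrix
   form of the [1 x 1] identity. *)
Definition cvdot : 'cV[C]_n -> 'cV[C]_n -> C :=
  form_of_matrix conjC (HermitianMx hermitianmx1).

HB.instance Definition _ := Hermitian.copy cvdot
  (@form_of_matrix C 1 conjC n (HermitianMx hermitianmx1)).

Local Notation "''[' u , v ]" := (cvdot u v).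
Local Notation "''[' u ]" := (cvdot u u).

Lemma cvdotE u v : '[u, v] = \sum_k u k 0 * (v k 0)^*.
Proof.
rewrite /cvdot /form_of_matrix /= mulmx1 /mxtrace; apply: eq_bigr => k _.
by rewrite !mxE big_ord1 !mxE.
Qed.

Lemma cvdot_normE u : '[u] = \sum_k `|u k 0| ^+ 2.
Proof. by rewrite cvdotE; apply: eq_bigr => k _; rewrite normCK. Qed.

Fact cvdot_gt0 u : u != 0 -> 0 < '[u].
Proof.
move=> nz_u; rewrite cvdot_normE lt_def sumr_ge0 ?andbT // => [|k _]; last first.
  exact: exprn_ge0.
apply: contra nz_u => /eqP/psumr_eq0P u0; apply/eqP/matrixP => k j.
rewrite (ord1 j) mxE; apply/eqP; rewrite -normr_eq0 -sqrf_eq0.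
by rewrite u0 // => i _; apply: exprn_ge0.
Qed.

HB.instance Definition _ := isDotProduct.Build C 'cV[C]_n cvdot cvdot_gt0.

End ColumnDot.

Notation "''[' u , v ]" := (cvdot u v) : ring_scope.
Notation "''[' u ]" := (cvdot u u) : ring_scope.

Section ColumnDotTheory.
Variable C : numClosedFieldType.

Lemma cvdot_ge0 n (u : 'cV[C]_n) : 0 <= '[u].
Proof. exact: dnorm_ge0. Qed.

Lemma dnorm_mulmx_le m n (M : 'M[C]_(m, n)) x :
  '[M *m x] <= (\sum_i '[\col_j (M i j)^*]) * '[x].
Proof.
rewrite cvdot_normE mulr_suml; apply: ler_sum => i _.
have -> : (M *m x) i 0 = '[x, \col_j (M i j)^*].
  by rewrite mxE cvdotE; apply: eq_bigr => j _; rewrite mxE conjCK mulrC.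
by rewrite mulrC; apply: (CauchySchwarz (@cvdot C n)).
Qed.

Definition rank_one_mx m n (w : 'cV[C]_m) (z : 'cV[C]_n) : 'M[C]_(m, n) :=
  w *m (map_mx conjC z)^T.

Lemma rank_one_mxE m n (w : 'cV[C]_m) (z u : 'cV[C]_n) :
  rank_one_mx w z *m u = '[u, z] *: w.
Proof.
rewrite /rank_one_mx -mulmxA [_ *m u]mx11_scalar mul_mx_scalar cvdotE mxE.
by congr (_ *: _); apply: eq_bigr => k _; rewrite !mxE mulrC.
Qed.

Lemma dnorm_rank_one_le m n (w : 'cV[C]_m) (z u : 'cV[C]_n) :
  '[rank_one_mx w z *m u] <= '[w] * '[z] * '[u].
Proof.
rewrite rank_one_mxE dnormZ mulrC -mulrA ler_wpM2l ?cvdot_ge0 //.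
by rewrite mulrC; apply: (CauchySchwarz (@cvdot C n)).
Qed.

End ColumnDotTheory.

Section SpectralNorm.
Variable R : realType.
Local Notation C := R[i].
Local Open Scope complex_scope.

Lemma vnorm_ge0 n (u : 'cV[C]_n) : 0 <= vnorm u.
Proof. exact: sqrtr_ge0. Qed.

Lemma vnorm_sqrE n (u : 'cV[C]_n) : (vnorm u ^+ 2)%:C = '[u].
Proof.
rewrite sqr_sqrtr; last by apply: sumr_ge0 => k _; rewrite addr_ge0 ?sqr_ge0.
rewrite rmorph_sum cvdot_normE; apply: eq_bigr => k _.
by rewrite normc_def -rmorphXn sqr_sqrtr // addr_ge0 ?sqr_ge0.
Qed.

Lemma vnorm_le n (u : 'cV[C]_n) (r : R) :
  0 <= r -> (vnorm u <= r) = ('[u] <= (r ^+ 2)%:C).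
Proof. by move=> r0; rewrite -ler_sqr ?nnegrE ?vnorm_ge0 // -lecR vnorm_sqrE. Qed.

Lemma vnorm_le1 n (u : 'cV[C]_n) : (vnorm u <= 1) = ('[u] <= 1).
Proof. by rewrite vnorm_le // expr1n. Qed.

Lemma specnorm_le1P m n (M : 'M[C]_(m, n)) :
  specnorm M <= 1 <-> forall z, '[M *m z] <= '[z].
Proof.
split=> [M1 | contrM]; last first.
  apply: ge_sup => [|_ [x [x1 ->]]].
    by exists (vnorm (M *m 0)), 0; rewrite vnorm_le1 linear0l ler01.
  by rewrite vnorm_le1 (le_trans (contrM x)) -?vnorm_le1.
(* [sup] of an unbounded set is [0]: the image of the unit ball must be
   shown to be bounded first. *)
pose F := \sum_i vnorm (\col_j (M i j)^*) ^+ 2.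
have F0 : 0 <= F by apply: sumr_ge0 => i _; apply: sqr_ge0.
have FE : F%:C = \sum_i '[\col_j (M i j)^*].
  by rewrite rmorph_sum; apply: eq_bigr => i _; apply: vnorm_sqrE.
have bounded : has_ubound
    [set r | exists x : 'cV[C]_n, vnorm x <= 1 /\ r = vnorm (M *m x)].
  exists (Num.sqrt F) => _ [x [x1 ->]].
  rewrite vnorm_le ?sqrtr_ge0 // sqr_sqrtr // -[F%:C]mulr1.
  apply: le_trans (dnorm_mulmx_le M x) _.
  by rewrite FE ler_wpM2l -?vnorm_le1 // sumr_ge0 // => i _; apply: cvdot_ge0.
have ball1 z : '[z] <= 1 -> '[M *m z] <= 1.
  move=> z1; rewrite -vnorm_le1; apply: le_trans M1.
  by apply: (ub_le_sup bounded); exists z; split; rewrite ?vnorm_le1.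
move=> z; have [->|nz_z] := eqVneq z 0; first by rewrite mulmx0 !linear0l.
have z_gt0 : 0 < '[z] by rewrite dnorm_gt0.
pose c := (sqrtC '[z])^-1.
have c2 : `|c| ^+ 2 = '[z]^-1.
  by rewrite normfV ger0_norm ?sqrtC_ge0 ?cvdot_ge0 // exprVn sqrtCK.
have := ball1 (c *: z); rewrite -scalemxAr !dnormZ c2 mulVf ?gt_eqF //.
by move=> /(_ (lexx 1)); rewrite mulrC ler_pdivrMr // mul1r.
Qed.

Lemma contraction_extension m n (z : 'cV[C]_n) (w : 'cV[C]_m) :
  '[w] <= '[z] -> exists D : 'M[C]_(m, n), specnorm D <= 1 /\ D *m z = w.
Proof.
move=> wz; have [z0|nz_z] := eqVneq z 0.
  exists 0; split.
    by apply/specnorm_le1P => u; rewrite mul0mx linear0l cvdot_ge0.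
  apply/esym/eqP; rewrite mul0mx -(dnorm_eq0 (@cvdot C m)) eq_le cvdot_ge0 andbT.
  by rewrite z0 linear0l in wz.
have z_gt0 : 0 < '[z] by rewrite dnorm_gt0.
exists ('[z]^-1 *: rank_one_mx w z); split; last first.
  by rewrite -scalemxAl rank_one_mxE scalerA mulVf ?gt_eqF ?scale1r.
apply/specnorm_le1P => u; rewrite -scalemxAl dnormZ normfV ger0_norm ?cvdot_ge0 //.
apply: le_trans (ler_wpM2l _ (dnorm_rank_one_le w z u)) _.
  by rewrite exprn_ge0 // invr_ge0 ltW.
rewrite exprVn mulrC ler_pdivrMr ?exprn_gt0 // [leRHS]mulrC expr2.
by rewrite !ler_wpM2r ?cvdot_ge0.
Qed.

End SpectralNorm.

Lemma normalized_perturbation_mulmx (F : comUnitRingType) m n (D : 'M[F]_(m, n))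
    (ao ai : 'M[F]_(m, n)) (bo bi : 'M[F]_m) (co ci : 'M[F]_n)
    p (x : 'M[F]_(n, p)) :
  co \in unitmx ->
  (invmx bo *m (ai - ao) *m invmx co + invmx bo *m bi *m D *m (ci *m invmx co))
    *m (co *m x)
  = invmx bo *m ((ai + bi *m D *m ci) *m x - ao *m x).
Proof.
move=> uco; rewrite mulmxDl -!mulmxA !(mulKmx uco) -mulmxDr; congr (_ *m _).
by rewrite mulmxBl mulmxDl !mulmxA addrAC.
Qed.

Lemma incl_dnormP (R : realType) ny nx (A : 'M[R]_(ny, nx)) B Cm x y :
  B \in unitmx ->
  incl A B Cm x y <-> '[invmx (cmx B) *m (y - cmx A *m x)] <= '[cmx Cm *m x].
Proof.
move=> uB; have ucB : cmx B \in unitmx by rewrite map_unitmx.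
split=> [[D [D1 ->]] | le_w_z].
  rewrite mulmxDl addrAC subrr add0r -!mulmxA mulKmx //.
  exact: (specnorm_le1P D).1 D1 _.
have [D [D1 eD]] := contraction_extension le_w_z.
by exists D; split => //; rewrite mulmxDl -!mulmxA eD mulKVmx // addrC subrK.
Qed.

Theorem lemma1 (R : realType) (ny nx : nat)
  (Ao Ai : 'M[R]_(ny, nx)) (Bo Bi : 'M[R]_ny) (Co Ci : 'M[R]_nx) :
  Bo \in unitmx -> Bi \in unitmx -> Co \in unitmx -> Ci \in unitmx ->
  (forall (x : 'cV[R[i]]_nx) (y : 'cV[R[i]]_ny),
      incl Ai Bi Ci x y -> incl Ao Bo Co x y)
  <->
  (forall Delta : 'M[R[i]]_(ny, nx),
      specnorm Delta <= 1 ->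
      specnorm (cmx (invmx Bo *m (Ai - Ao) *m invmx Co)
                + cmx (invmx Bo *m Bi) *m Delta *m cmx (Ci *m invmx Co)) <= 1).
Proof.
move=> uBo _ uCo _.
have ucCo : cmx Co \in unitmx by rewrite map_unitmx.
rewrite /cmx !(map_mxM, map_mxB, map_invmx) -!/(cmx _).
split=> [sub D D1 | contr x y [D [D1 ->]]].
  apply/specnorm_le1P => z; rewrite -[z](mulKVmx ucCo) normalized_perturbation_mulmx //.
  apply/incl_dnormP/sub => //; exists D; split => //.
apply/incl_dnormP => //.
have := (specnorm_le1P _).1 (contr D D1) (cmx Co *m x).
by rewrite normalized_perturbation_mulmx.
Qed.
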